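(* Let $k\geq 2$ and let $U$ be an $n\times n$ unitary matrix with entries in $\mathcal{R}_{2^k}$. Then \[\det\nolimits_{\mathcal{R}_{2^{k-1}}}(\phi_k(U))=\det\nolimits_{\mathcal{R}_{2^{k-1}}}\big(\phi_k(\det\nolimits_{\mathcal{R}_{2^k}}(U))\big).\]
   Context: $\zeta_n=e^{2\pi i/n}$ and $\mathcal{R}_n$ is the smallest subring of $\mathbb{C}$ containing $1/2$ and $\zeta_n$. For $k\ge2$, every matrix $M$ with entries in $\mathcal{R}_{2^k}$ can be uniquely written as $M=A+B\zeta_{2^k}$ with $A,B$ matrices over $\mathcal{R}_{2^{k-1}}$; define $\phi_k(M)=A\otimes I_2+B\otimes\Lambda_k$, where $\Lambda_k=\begin{bmatrix}0&1\\ \zeta_{2^{k-1}}&0\end{bmatrix}$. In particular for a scalar $u\in\mathcal{R}_{2^k}$, $\phi_k(u)$ is a $2\times 2$ matrix over $\mathcal{R}_{2^{k-1}}$. $\det_R$ denotes the determinant computed over the ring $R$. *)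

From mathcomp Require Import all_boot all_algebra all_field.
From mathcomp Require Import mxtens.
Set Implicit Arguments. Unset Strict Implicit. Unset Printing Implicit Defensive.
Import GRing.Theory Num.Theory.
Local Open Scope ring_scope.

(* Complex numbers are modelled by algC (algebraic complex numbers); all
   the numbers involved are algebraic. *)

(* zeta n = e^{2 pi i/n}: n.-root (-1) is the n-th root of -1 of minimal
   nonnegative argument, i.e. e^{i pi/n}; its square is e^{2 pi i/n}. *)
Definition zeta (n : nat) : algC := (n.-root (-1)) ^+ 2.

Definition inR (n : nat) (x : algC) : Prop :=
  forall S : {pred algC}, subring_closed S ->
    2%:R^-1 \in S -> zeta n \in S -> x \in S.

Definition mxOverR (n : nat) {p q : nat} (M : 'M[algC]_(p, q)) : Prop :=
  forall i j, inR n (M i j).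

Definition unitary {n : nat} (U : 'M[algC]_n) : Prop :=
  U *m (map_mx (fun x : algC => x^*) U)^T = 1%:M.

Definition Lambda (k : nat) : 'M[algC]_2 :=
  \matrix_(i < 2, j < 2)
    if ((i : nat) == 0%N) && ((j : nat) == 1%N) then 1
    else if ((i : nat) == 1%N) && ((j : nat) == 0%N) then zeta (2 ^ (k - 1))
    else 0.

(* phi_k (A + B zeta_{2^k}) = A (x) I_2 + B (x) Lambda_k  (Kronecker product) *)
Definition phi (k : nat) {n : nat} (A B : 'M[algC]_n) : 'M[algC]_(n * 2) :=
  A *t (1%:M : 'M[algC]_2) + B *t Lambda k.

Definition phi_scalar (k : nat) (a b : algC) : 'M[algC]_2 :=
  a%:M + b *: Lambda k.

From mathcomp Require Import all_boot all_algebra all_field.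
From mathcomp Require Import all_order all_fingroup mxtens.
Import Order.TTheory GRing.Theory Num.Theory.
Local Open Scope ring_scope.

(* Up to a simultaneous permutation of rows and columns, phi_k(A + zeta B) is
   the block matrix [[A, B], [zeta^2 B, A]], whose determinant is
   det (A + zeta B) * det (A - zeta B).  Since A and B have entries in
   R_{2^(k-1)}, the second factor is the image of det U under an automorphism
   of C that fixes zeta_{2^(k-1)} and maps zeta = zeta_{2^k} to -zeta, namely
   (a - zeta b) for det U = a + zeta b; the same factorization applied to the
   1 x 1 matrix det U gives the right-hand side. *)

Lemma norm_rootCN1 n : (0 < n)%N -> `|n.-root (-1 : algC)| = 1.
Proof. by move=> n_gt0; rewrite norm_rootC normrN normr1 rootC1. Qed.

Lemma Im_rootCN1_ge0 n : 0 <= 'Im (n.-root (-1 : algC)).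
Proof.
case: n => [|[|n]]; last exact: Im_rootC_ge0.
  by rewrite root0C raddf0.
by rewrite -[1.-root _]expr1 rootCK // raddfN /= (Creal_ImP _ (rpred1 _)) oppr0.
Qed.

Lemma Re_sqrC (z : algC) : 'Re (z ^+ 2) = 'Re z ^+ 2 *+ 2 - `|z| ^+ 2.
Proof. by rewrite expr2 ReM normC2_Re_Im -!expr2 mulr2n opprD addrA addrK. Qed.

Lemma Re_sqrtC_ge0 (x : algC) : 0 <= 'Im x -> 0 <= 'Re (sqrtC x).
Proof.
set t := sqrtC x => Im_x_ge0.
have := Im_rootC_ge0 x (isT : (1 < 2)%N); rewrite -/t le0r.
case/orP => [/eqP/Creal_ImP t_real | Im_t_gt0].
  by rewrite (Creal_ReP _ t_real) real_leNgt ?rpred0 ?sqrtC_lt0.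
by move: Im_x_ge0; rewrite -(sqrtCK x) expr2 ImM -mulr2n pmulrn_lge0 // pmulr_lge0.
Qed.

Lemma Re_rootC_even_ge0 n (x : algC) :
  ~~ odd n -> (0 < n)%N -> x \is Num.real -> 0 <= 'Re (n.-root x).
Proof.
move=> n_even n_gt0 x_real; set r := n.-root x.
have n_gt1 : (1 < n)%N by case: n n_even n_gt0 {r} => [|[]].
(* [- r^*] is another [n]-th root of [x] in the upper half plane. *)
have : 'Re (- r^*) <= 'Re r.
  apply: rootC_Re_max => //; last by rewrite raddfN /= Im_conj opprK Im_rootC_ge0.
  by rewrite exprNn -signr_odd (negPf n_even) mul1r -rmorphXn rootCK //; exact: conj_Creal.
by rewrite raddfN /= Re_conj -subr_ge0 opprK -mulr2n pmulrn_lge0.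
Qed.

Lemma rootCN1_double_sqr n :
  (0 < n)%N -> (2 * n).-root (-1 : algC) ^+ 2 = n.-root (-1).
Proof.
move=> n_gt0; have n2_gt0 : (0 < 2 * n)%N by rewrite muln_gt0.
set r := (2 * n).-root (-1 : algC); set s := n.-root (-1 : algC).
have Re_r_ge0 : 0 <= 'Re r.
  by apply: Re_rootC_even_ge0; rewrite ?oddM ?rpredN ?rpred1.
have Im_r2_ge0 : 0 <= 'Im (r ^+ 2).
  by rewrite expr2 ImM addr_ge0 // mulr_ge0 //; apply: Im_rootCN1_ge0.
have norm_r : `|r| = 1 by apply: norm_rootCN1.
apply: eqC_semipolar; last by rewrite mulr_ge0 //; apply: Im_rootCN1_ge0.
  by rewrite normrX norm_r norm_rootCN1 ?expr1n.
have r2n : (r ^+ 2) ^+ n = -1 by rewrite -exprM rootCK.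
apply/le_anti; rewrite rootC_Re_max //=.
(* For the reverse inequality compare [r] with the square root of [s] in the
   first quadrant, using [Re (w ^+ 2) = 2 (Re w)^2 - 1] on the unit circle. *)
set t := sqrtC s; have t2 : t ^+ 2 = s := sqrtCK s.
have Re_t_ge0 : 0 <= 'Re t by apply/Re_sqrtC_ge0/Im_rootCN1_ge0.
have Re_t_le_r : 'Re t <= 'Re r.
  by apply: rootC_Re_max; rewrite ?exprM ?t2 ?rootCK ?Im_rootC_ge0.
have norm_t2 : `|t| ^+ 2 = 1 by rewrite -normrX t2 norm_rootCN1.
rewrite -t2 !Re_sqrC norm_t2 norm_r expr1n lerD2r lerMn2r /=.
by rewrite ler_pXn2r ?nnegrE.
Qed.

Lemma zeta_double_sqr n : (0 < n)%N -> zeta (2 * n) ^+ 2 = zeta n.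
Proof. by move=> n_gt0; rewrite /zeta rootCN1_double_sqr. Qed.

Lemma zeta_double_expn n : (0 < n)%N -> zeta (2 * n) ^+ n = -1.
Proof. by move=> n_gt0; rewrite /zeta -exprM rootCK // muln_gt0. Qed.

Lemma rmorph_inR_fixed (u : {rmorphism algC -> algC}) n x :
  u (zeta n) = zeta n -> inR n x -> u x = x.
Proof.
move=> u_zeta /(_ [pred y | u y == y]) x_fixed; apply/eqP/x_fixed.
- split; first by rewrite inE rmorph1.
  + by move=> y z; rewrite !inE rmorphB => /eqP-> /eqP->.
  + by move=> y z; rewrite !inE rmorphM => /eqP-> /eqP->.
- by rewrite inE fmorphV rmorph_nat.
- by rewrite inE u_zeta.
Qed.

(* The Galois automorphism [z |-> z ^+ n.+1] of [Q(zeta (2 * n))] is the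
   identity on [Q(zeta n)], as [zeta (2 * n) ^+ n = -1]. *)
Lemma zeta_double_opp_aut {n} : ~~ odd n -> (0 < n)%N ->
  exists2 u : {rmorphism algC -> algC},
    u (zeta (2 * n)) = - zeta (2 * n) & u (zeta n) = zeta n.
Proof.
move=> n_even n_gt0; set z := zeta (2 * n).
have zn : z ^+ n = -1 by exact: zeta_double_expn.
have co_n1_2n : coprime n.+1 (2 * n) by rewrite coprimeMr coprimeSn coprimen2 /= n_even.
have [u u_exp] := Qn_aut_exists co_n1_2n.
have uz : u z = - z.
  by rewrite u_exp ?exprS ?zn ?mulrN1 // mulnC exprM zn sqrrN expr1n.
by exists u; rewrite // -zeta_double_sqr // rmorphXn uz sqrrN.
Qed.

Lemma det_mxsub_inj {R : comNzRingType} {m n} (eq_mn : m = n) {f : 'I_m -> 'I_n}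
  (A : 'M[R]_n) : injective f -> \det (mxsub f f A) = \det A.
Proof.
case: n / eq_mn in f A * => f_inj; set s := perm f_inj.
have -> : mxsub f f A = row_perm s (col_perm s A).
  by apply/matrixP => i j; rewrite !mxE !permE.
rewrite row_permE col_permE !det_mulmx mulrCA -det_mulmx -perm_mxM.
by rewrite mulgV perm_mx1 det1 mulr1.
Qed.

(* Sends the index [2 i + r] of a Kronecker product with a [2 x 2] matrix to
   the index [i + r n] of the corresponding [2 x 2] block matrix. *)
Definition unshuffle n (t : 'I_(n * 2)) : 'I_(n + n) :=
  let: (i, r) := mxtens_unindex t in
  if r == ord0 then lshift n i else rshift n i.

Lemma unshuffle_inj n : injective (unshuffle n).
Proof.
move=> t t'; case: (mxtens_indexP t) => i r; case: (mxtens_indexP t') => j s.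
rewrite /unshuffle !mxtens_indexK.
case: r s => [[|[|//]] ?] [[|[|//]] ?] /=.
- by move/lshift_inj->; congr mxtens_index; congr pair; exact: val_inj.
- by move/(congr1 val) => /= eq_ij; have := ltn_ord i; rewrite eq_ij ltnNge leq_addr.
- by move/(congr1 val) => /= eq_ij; have := ltn_ord j; rewrite -eq_ij ltnNge leq_addr.
- by move/rshift_inj->; congr mxtens_index; congr pair; exact: val_inj.
Qed.

Lemma phi_block k n (A B : 'M[algC]_n) :
  phi k A B =
    mxsub (unshuffle n) (unshuffle n) (block_mx A B (zeta (2 ^ (k - 1)) *: B) A).
Proof.
apply/matrixP => t t'.
case: (mxtens_indexP t) => i r; case: (mxtens_indexP t') => j s.
rewrite /phi [RHS]mxE [LHS]mxE !tensmxE /unshuffle !mxtens_indexK.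
case: r s => [[|[|//]] ?] [[|[|//]] ?] /=.
- by rewrite block_mxEul !mxE /= mulr1 mulr0 addr0.
- by rewrite block_mxEur !mxE /= mulr0 mulr1 add0r.
- by rewrite block_mxEdl !mxE /= mulr0 add0r mulrC.
- by rewrite block_mxEdr !mxE /= mulr1 mulr0 addr0.
Qed.

Lemma det_block_sqr (R : comNzRingType) n (A B : 'M[R]_n) z :
  \det (block_mx A B (z ^+ 2 *: B) A) = \det (A + z *: B) * \det (A - z *: B).
Proof.
pose L c : 'M[R]_(n + n) := block_mx 1%:M 0 c%:M 1%:M.
have det_L c : \det (L c) = 1 by rewrite det_lblock !det1 mulr1.
rewrite -[LHS]mul1r -(det_L (- z)) -[LHS]mulr1 -(det_L z) -!det_mulmx.
rewrite !mulmx_block !(mul1mx, mul0mx, mulmx1, mulmx0, mul_scalar_mx, mul_mx_scalar).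
have -> : - z *: A + z ^+ 2 *: B + z *: (- z *: B + A) = 0.
  by rewrite scalerDr scalerA mulrN -expr2 !scaleNr addrA addrK addNr.
by rewrite !(addr0, add0r) det_ublock det_mulmx scaleNr [- _ + A]addrC.
Qed.

Lemma det_phi {k n} (A B : 'M[algC]_n) {z : algC} : z ^+ 2 = zeta (2 ^ (k - 1)) ->
  \det (phi k A B) = \det (A + z *: B) * \det (A - z *: B).
Proof.
move=> z2; have n2E : (n * 2 = n + n)%N by rewrite muln2 addnn.
by rewrite phi_block (det_mxsub_inj n2E _ (unshuffle_inj n)) -z2 det_block_sqr.
Qed.

Lemma phi_scalar_mx11 k a b : phi_scalar k a b = phi k (a%:M : 'M_1) b%:M.
Proof.
apply/matrixP => t t'.
case: (@mxtens_indexP 1 2 t) => i r; case: (@mxtens_indexP 1 2 t') => j s.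
rewrite /phi /phi_scalar [RHS]mxE !tensmxE !mxE !ord1 /=.
by case: r s => [[|[|//]] ?] [[|[|//]] ?];
  rewrite /= ?mulr1n ?mulr0n ?mulr1 ?mulr0 ?addr0 ?add0r ?mul1r.
Qed.

Lemma det_phi_scalar {k} (a b : algC) {z : algC} : z ^+ 2 = zeta (2 ^ (k - 1)) ->
  \det (phi_scalar k a b) = (a + z * b) * (a - z * b).
Proof.
move=> z2; have := det_phi (a%:M : 'M_1) b%:M z2.
by rewrite -phi_scalar_mx11 !det_mx11 !mxE !mulr1n.
Qed.

Theorem corollary5p2 (k n : nat) (hk : (2 <= k)%N) (U : 'M[algC]_n)
  (hUR : mxOverR (2 ^ k) U) (hU : unitary U)
  (A B : 'M[algC]_n) (hA : mxOverR (2 ^ (k - 1)) A) (hB : mxOverR (2 ^ (k - 1)) B)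
  (hAB : U = A + zeta (2 ^ k) *: B)
  (a b : algC) (ha : inR (2 ^ (k - 1)) a) (hb : inR (2 ^ (k - 1)) b)
  (hab : \det U = a + b * zeta (2 ^ k)) :
  \det (phi k A B) = \det (phi_scalar k a b).
Proof.
set m := (2 ^ (k - 1))%N in hA hB ha hb *.
have m_gt0 : (0 < m)%N by rewrite expn_gt0.
have m_even : ~~ odd m by rewrite oddX negb_or subn_eq0 -ltnNge (leq_trans _ hk).
have km : (2 ^ k = 2 * m)%N by rewrite -expnS subn1 prednK // (leq_trans _ hk).
rewrite km in hAB hab; set z := zeta (2 * m) in hAB hab.
have [u uz u_zeta] := zeta_double_opp_aut m_even m_gt0.
have u_fixed x : inR m x -> u x = x by exact: rmorph_inR_fixed.
have z2 : z ^+ 2 = zeta m by exact: zeta_double_sqr.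
have det_plus : \det (A + z *: B) = a + z * b by rewrite -hAB hab mulrC.
have det_minus : \det (A - z *: B) = a - z * b.
  have -> : A - z *: B = map_mx u (A + z *: B).
    by apply/matrixP => i j; rewrite !mxE rmorphD rmorphM uz !u_fixed // mulNr.
  by rewrite det_map_mx det_plus rmorphD rmorphM uz !u_fixed // mulNr.
by rewrite (det_phi _ _ z2) (det_phi_scalar _ _ z2) det_plus det_minus.
Qed.
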